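(* Let $n,k_1,k_2$ be nonnegative integers with $k_1+k_2\le n$ and $\ell=n-k_1-k_2$. Let $C$ be a $\mathbb{Z}_4$-code of length $n$ and type $4^{k_1}2^{k_2}$ which is inequivalent to the trivial extension of any $\mathbb{Z}_4$-code of length $n-1$ and type $4^{k_1}2^{k_2}$. Then there is a $\mathbb{Z}_4$-code $C'$ of length $n$ and type $4^{k_1}2^{k_2}$ with $C\cong C'$ having a generator matrix $G(A,B,D)\in\mathcal{V}$ such that the matrix $\begin{pmatrix}B\\2D\end{pmatrix}$ has no zero column.
   Context: $\mathbb{Z}_4=\{0,1,2,3\}$ is the ring of integers modulo $4$; a $\mathbb{Z}_4$-code of length $n$ is a submodule of $\mathbb{Z}_4^n$, and two codes are equivalent ($\cong$) if one is obtained from the other by permuting coordinates and changing the signs of some coordinates. A code has type $4^{k_1}2^{k_2}$ if it is permutation-equivalent to a code with generator matrix $G(A,B,D)=\begin{pmatrix} I_{k_1} & A & B\\ O & 2I_{k_2} & 2D\end{pmatrix}$ with $A$ a $k_1\times k_2$ $(0,1)$-matrix, $D$ a $k_2\times\ell$ $(0,1)$-matrix, $B$ a $k_1\times\ell$ $\mathbb{Z}_4$-matrix. The trivial extension of a code $C_0$ of length $n-1$ is $\{(c,0)\mid c\in C_0\}$. Order $\mathbb{Z}_4$ by $0<1<2<3$ and order vectors lexicographically. Let $M_{m\times n}(R)$ denote the set of $m\times n$ matrices with entries in $R$. For $T\subset M_{m\times n}(\mathbb{Z}_4)$ let $P_{row}(T)$ be the set of matrices in $T$ whose rows $a_1,\dots,a_m$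 satisfy $a_i\le a_j$ whenever $i\le j$, and $P_{col}(T)$ the set of matrices in $T$ whose columns $b_1,\dots,b_n$ satisfy $b_i^T\le b_j^T$ whenever $i\le j$. Let $\mathcal{S}=\{G(A,B,D)\mid A\in M_{k_1\times k_2}(\{0,1\}),\ B\in M_{k_1\times\ell}(\mathbb{Z}_4),\ D\in M_{k_2\times\ell}(\{0,1\})\}$, $\mathcal{T}=\{G(A,B,D)\in\mathcal{S}\mid A\in P_{row}(M_{k_1\times k_2}(\{0,1\}))\}$. Let $\mathcal{B}$ be the set consisting of all $k_1\times\ell$ matrices with entries in $\{0,2\}$ together with all $k_1\times\ell$ $\mathbb{Z}_4$-matrices $B$ such that, for the smallest $i$ for which the $i$-th row of $B$ contains an entry not in $\{0,2\}$, the $i$-th row of $B$ has all entries in $\{0,1,2\}$. Let $\mathcal{U}=\{G(A,B,D)\in\mathcal{T}\mid B\in\mathcal{B}\}$ and $\mathcal{V}=\{G(A,B,D)\in\mathcal{U}\mid \begin{pmatrix}B\\2D\end{pmatrix}\in P_{col}(M_{(k_1+k_2)\times\ell}(\mathbb{Z}_4))\}$. *)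

From HB Require Import structures.
From mathcomp Require Import all_boot all_order all_fingroup all_algebra.
Set Implicit Arguments. Unset Strict Implicit. Unset Printing Implicit Defensive.
Import GRing.Theory.
Local Open Scope ring_scope.

Notation Z4 := 'Z_4.

Definition mx_at (R : Type) (m p : nat) (x0 : R) (M : 'M[R]_(m, p)) (i j : nat) : R :=
  match (insub i : option 'I_m) with
  | Some i' => match (insub j : option 'I_p) with
               | Some j' => M i' j'
               | None => x0 end
  | None => x0 end.

Definition is_code (n : nat) (C : {set 'rV[Z4]_n}) : Prop :=
  0 \in C /\ (forall x y, x \in C -> y \in C -> x + y \in C)
  /\ (forall (a : Z4) x, x \in C -> a *: x \in C).

Definition gen_code (m n : nat) (G : 'M[Z4]_(m, n)) : {set 'rV[Z4]_n} :=
  [set v *m G | v : 'rV[Z4]_m].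

Definition permv (n : nat) (s : 'S_n) (x : 'rV[Z4]_n) : 'rV[Z4]_n :=
  \row_j x 0 (s j).
Definition signpermv (n : nat) (s : 'S_n) (e : 'I_n -> bool) (x : 'rV[Z4]_n)
  : 'rV[Z4]_n := \row_j ((if e j then -1 else 1) * x 0 (s j)).

Definition perm_equiv (n : nat) (C C' : {set 'rV[Z4]_n}) : Prop :=
  exists s : 'S_n, C' = [set permv s x | x in C].
Definition code_equiv (n : nat) (C C' : {set 'rV[Z4]_n}) : Prop :=
  exists (s : 'S_n) (e : 'I_n -> bool), C' = [set signpermv s e x | x in C].

(* The matrix G(A,B,D) = [[I_k1, A, B], [O, 2 I_k2, 2 D]], of size
   (k1+k2) x n, where l = n - k1 - k2 (meaningful when k1 + k2 <= n). *)
Definition Gmat (n k1 k2 : nat) (A : 'M[Z4]_(k1, k2))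
  (B : 'M[Z4]_(k1, n - k1 - k2)) (D : 'M[Z4]_(k2, n - k1 - k2))
  : 'M[Z4]_(k1 + k2, n) :=
  \matrix_(i, j)
    let i := nat_of_ord i in let j := nat_of_ord j in
    if (i < k1)%N then
      (if (j < k1)%N then (i == j)%:R
       else if (j < k1 + k2)%N then mx_at 0 A i (j - k1)%N
       else mx_at 0 B i (j - k1 - k2)%N)
    else
      (if (j < k1)%N then 0
       else if (j < k1 + k2)%N then 2%:R * (i - k1 == j - k1)%N%:R
       else 2%:R * mx_at 0 D (i - k1)%N (j - k1 - k2)%N).

Definition is01 (m p : nat) (M : 'M[Z4]_(m, p)) : Prop :=
  forall i j, (nat_of_ord (M i j) <= 1)%N.

Definition has_type (n k1 k2 : nat) (C : {set 'rV[Z4]_n}) : Prop :=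
  is_code C /\ (k1 + k2 <= n)%N /\
  exists (A : 'M[Z4]_(k1, k2)) (B : 'M[Z4]_(k1, n - k1 - k2))
         (D : 'M[Z4]_(k2, n - k1 - k2)),
    is01 A /\ is01 D /\ perm_equiv (gen_code (Gmat A B D)) C.

(* Trivial extension, as a code of length n, of a code C0 of length m
   (used with n = m + 1): { (c, 0) | c in C0 }. *)
Definition triv_ext (n m : nat) (C0 : {set 'rV[Z4]_m}) : {set 'rV[Z4]_n} :=
  [set x : 'rV[Z4]_n | [exists c in C0,
     [forall j : 'I_n, x 0 j == (if (j < m)%N then mx_at 0 c 0 j else 0)]]].

(* Lexicographic order on vectors, with 0 < 1 < 2 < 3 on Z4. *)
Fixpoint lexle (s t : seq nat) : bool :=
  match s, t with
  | [::], _ => true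
  | _ :: _, [::] => false
  | x :: s', y :: t' => (x < y)%N || ((x == y) && lexle s' t')
  end.

Definition rowseq (m p : nat) (M : 'M[Z4]_(m, p)) (i : 'I_m) : seq nat :=
  [seq nat_of_ord (M i j) | j <- enum 'I_p].
Definition colseq (m p : nat) (M : 'M[Z4]_(m, p)) (j : 'I_p) : seq nat :=
  [seq nat_of_ord (M i j) | i <- enum 'I_m].

Definition Prow (m p : nat) (M : 'M[Z4]_(m, p)) : Prop :=
  forall i j : 'I_m, (i <= j)%N -> lexle (rowseq M i) (rowseq M j).
Definition Pcol (m p : nat) (M : 'M[Z4]_(m, p)) : Prop :=
  forall i j : 'I_p, (i <= j)%N -> lexle (colseq M i) (colseq M j).

Definition in02 (x : Z4) : bool := (nat_of_ord x == 0)%N || (nat_of_ord x == 2)%N.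
Definition in012 (x : Z4) : bool := (nat_of_ord x <= 2)%N.

Definition inBset (k1 l : nat) (B : 'M[Z4]_(k1, l)) : Prop :=
  (forall i j, in02 (B i j)) \/
  (exists i : 'I_k1,
     (forall i' : 'I_k1, (i' < i)%N -> forall j, in02 (B i' j)) /\
     (exists j, ~~ in02 (B i j)) /\
     (forall j, in012 (B i j))).

Definition inV (n k1 k2 : nat) (A : 'M[Z4]_(k1, k2))
  (B : 'M[Z4]_(k1, n - k1 - k2)) (D : 'M[Z4]_(k2, n - k1 - k2)) : Prop :=
  is01 A /\ is01 D /\ Prow A /\ inBset B /\ Pcol (col_mx B (2%:R *: D)).

From HB Require Import structures.
From mathcomp Require Import all_boot all_order all_fingroup all_algebra.
From mathcomp Require Import zify.
Set Implicit Arguments. Unset Strict Implicit. Unset Printing Implicit Defensive.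
Import Order.TTheory GRing.Theory.
Local Open Scope ring_scope.

(* Permuting rows, and permuting or negating columns, of a generator matrix
   gives an equivalent code, and for G(A,B,D) these operations can be chosen
   to act on A, B and D separately. Sorting the rows of A (moving the first k1
   columns along with them), negating the columns of B in which the first row
   of B not over {0,2} has a 3, and then sorting the columns of (B; 2D) puts
   the generator matrix in V. A zero column left in (B; 2D) could be moved to
   the end, making C equivalent to the trivial extension of the code generated
   by G(A,B,D) with that column deleted, which has the same type. *)

Notation sg b := (if b then -1 else 1 : Z4).

Lemma in02_sg (b : bool) (x : Z4) : in02 (sg b * x) = in02 x.
Proof. by case: b; rewrite ?mul1r //; case: x => -[|[|[|[|//]]]]. Qed.

Lemma sg_mul2 (b : bool) (x : Z4) : sg b * (2%:R * x) = 2%:R * x.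
Proof. by case: b; rewrite ?mul1r //; case: x => -[|[|[|[|//]]]] ?; apply/val_inj. Qed.

Lemma in012_sg_eq3 (x : Z4) : in012 (sg (nat_of_ord x == 3%N) * x).
Proof. by case: x => -[|[|[|[|//]]]]. Qed.

Lemma sgM (a b : bool) : sg a * sg b = sg (a (+) b).
Proof. by case: a; case: b; rewrite /= ?mulrNN ?mulr1 ?mul1r ?mulN1r. Qed.

Lemma lexleE (s t : seq nat) : lexle s t = (s <= t :> seqlexi nat)%O.
Proof.
elim: s t => [|x s IH] [|y t] //=.
by rewrite lexi_cons IH leEnat; case: ltngtP.
Qed.

Lemma exists_sorting_perm d (T : orderType d) p (F : 'I_p -> T) :
  exists pi : 'S_p, forall i j : 'I_p, (i <= j)%N -> (F (pi i) <= F (pi j))%O.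
Proof.
pose r x y := (F x <= F y)%O.
have r_trans : transitive r by move=> x y z; apply: le_trans.
pose s := sort r (enum 'I_p).
have s_perm : perm_eq s (enum 'I_p) by rewrite perm_sort.
have s_uniq : uniq s by rewrite (perm_uniq s_perm) enum_uniq.
have s_size : size s = p by rewrite (perm_size s_perm) size_enum_ord.
have s_sorted : sorted r s by apply: sort_sorted => x y; apply: le_total.
have nthE (i x0 : 'I_p) : nth i s i = nth x0 s i.
  by apply: set_nth_default; rewrite s_size.
have nth_inj : injective (fun i : 'I_p => nth i s i).
  by move=> i j; rewrite (nthE j i) => /eqP; rewrite nth_uniq ?s_size // => /eqP/val_inj.
exists (perm nth_inj) => i j le_ij; rewrite !permE (nthE j i).
have r_refl : reflexive r by move=> x; apply: lexx.
by apply: (sorted_leq_nth r_trans r_refl i s_sorted); rewrite ?inE ?s_size.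
Qed.

Definition signperm_mx m p (M : 'M[Z4]_(m, p)) (r : 'S_m) (c : 'S_p)
  (e : 'I_p -> bool) : 'M[Z4]_(m, p) :=
  \matrix_(i, j) (sg (e j) * M (r i) (c j)).

Notation no_sign := (fun _ => false).

Lemma gen_code_signperm_mx m p (M : 'M[Z4]_(m, p)) r c e :
  gen_code (signperm_mx M r c e) = [set signpermv c e x | x in gen_code M].
Proof.
pose rowr (w : 'rV[Z4]_m) := \row_i w 0 (r i).
have rowrK : cancel (fun w : 'rV[Z4]_m => \row_i w 0 ((r^-1)%g i)) rowr.
  by move=> w; apply/rowP => i; rewrite /rowr !mxE permK.
have mulE w : rowr w *m signperm_mx M r c e = signpermv c e (w *m M).
  apply/rowP => j; rewrite !mxE mulr_sumr [in RHS](reindex_inj (@perm_inj _ r)).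
  by apply: eq_bigr => i _; rewrite !mxE mulrCA.
apply/setP => x; apply/imsetP/imsetP => [[v _ ->]|[y /imsetP[w _ ->] ->]].
- rewrite -[v]rowrK mulE; exists ((\row_i v 0 ((r^-1)%g i)) *m M) => //.
  exact: imset_f.
- by exists (rowr w); rewrite ?mulE.
Qed.

Lemma code_equiv_trans n (X Y Z : {set 'rV[Z4]_n}) :
  code_equiv X Y -> code_equiv Y Z -> code_equiv X Z.
Proof.
case=> s1 [e1 ->] [s2 [e2 ->]]; exists (s2 * s1)%g, (fun j => e2 j (+) e1 (s2 j)).
rewrite -imset_comp; apply: eq_imset => x; apply/rowP => j.
by rewrite /= !mxE permM mulrA sgM.
Qed.

Lemma code_equiv_signperm_mx m p (M : 'M[Z4]_(m, p)) r c e :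
  code_equiv (gen_code M) (gen_code (signperm_mx M r c e)).
Proof. by rewrite gen_code_signperm_mx; exists c, e. Qed.

Lemma perm_equiv_code_equivV n (X Y : {set 'rV[Z4]_n}) :
  perm_equiv X Y -> code_equiv Y X.
Proof.
case=> s ->; exists (s^-1)%g, no_sign.
rewrite -imset_comp -[LHS]imset_id; apply: eq_imset => x; apply/rowP => j.
by rewrite /= !mxE mul1r permKV.
Qed.

Lemma gen_code_is_code m n (G : 'M[Z4]_(m, n)) : is_code (gen_code G).
Proof.
split; first by apply/imsetP; exists 0; rewrite ?mul0mx.
split=> [x y|a x].
- move=> /imsetP[v _ ->] /imsetP[w _ ->].
  by apply/imsetP; exists (v + w); rewrite ?mulmxDl.
- by move=> /imsetP[v _ ->]; apply/imsetP; exists (a *: v); rewrite ?scalemxAl.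
Qed.

Lemma has_type_gen_code n k1 k2 (hk : (k1 + k2 <= n)%N) (A : 'M[Z4]_(k1, k2))
  (B : 'M[Z4]_(k1, n - k1 - k2)) (D : 'M[Z4]_(k2, n - k1 - k2)) :
  is01 A -> is01 D -> has_type k1 k2 (gen_code (Gmat A B D)).
Proof.
move=> hA hD; split; first exact: gen_code_is_code.
split=> //; exists A, B, D; do 2!split=> //; exists 1%g.
rewrite -[LHS]imset_id; apply: eq_imset => x; apply/rowP => j.
by rewrite !mxE perm1.
Qed.

Definition nat_perm k (s : 'S_k) (x : nat) : nat :=
  if insub x is Some x' then val (s x') else x.

Definition nat_flag k (e : 'I_k -> bool) (x : nat) : bool :=
  if insub x is Some x' then e x' else false.

Lemma nat_perm_val k (s : 'S_k) (i : 'I_k) : nat_perm s i = s i.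
Proof. by rewrite /nat_perm valK. Qed.

Lemma nat_perm_out k (s : 'S_k) x : (k <= x)%N -> nat_perm s x = x.
Proof. by move=> h; rewrite /nat_perm insubN // -leqNgt. Qed.

Lemma nat_perm_lt k (s : 'S_k) x : (nat_perm s x < k)%N = (x < k)%N.
Proof.
case: (ltnP x k) => h; last by rewrite nat_perm_out // ltnNge h.
by rewrite -[x]/(val (Ordinal h)) nat_perm_val !ltn_ord.
Qed.

Lemma nat_perm_inj k (s : 'S_k) : injective (nat_perm s).
Proof.
move=> x y; case: (ltnP x k) => hx; case: (ltnP y k) => hy.
- rewrite -[x]/(val (Ordinal hx)) -[y]/(val (Ordinal hy)) !nat_perm_val.
  by move/val_inj/perm_inj => [].
- by rewrite (nat_perm_out s hy) => e; move: (nat_perm_lt s x); rewrite e hx ltnNge hy.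
- by rewrite (nat_perm_out s hx) => e; move: (nat_perm_lt s y); rewrite -e hy ltnNge hx.
- by rewrite !nat_perm_out.
Qed.

Lemma nat_perm1 k x : nat_perm (1 : 'S_k)%g x = x.
Proof. by rewrite /nat_perm; case: insubP => // x' _ <-; rewrite perm1. Qed.

Lemma nat_flag_no_sign k x : nat_flag (no_sign : 'I_k -> bool) x = false.
Proof. by rewrite /nat_flag; case: insubP. Qed.

Lemma exists_perm_of_nat n (g : nat -> nat) : injective g ->
  (forall x, (x < n)%N -> (g x < n)%N) ->
  exists s : 'S_n, forall j, val (s j) = g j.
Proof.
move=> g_inj g_lt; pose f (j : 'I_n) := Ordinal (g_lt _ (ltn_ord j)).
have f_inj : injective f by move=> i j [] /g_inj /val_inj.
by exists (perm f_inj) => j; rewrite permE.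
Qed.

Lemma nat_perm_ltn k n (s : 'S_k) x :
  (k <= n)%N -> (x < n)%N -> (nat_perm s x < n)%N.
Proof.
move=> le_kn lt_xn; case: (ltnP x k) => h; last by rewrite nat_perm_out.
by have := nat_perm_lt s x; rewrite h; lia.
Qed.

Definition nat_shift_perm k l (pi : 'S_l) (y : nat) : nat :=
  if (y < k)%N then y else (k + nat_perm pi (y - k))%N.

Lemma nat_shift_perm_lt k l (pi : 'S_l) x :
  (x < k + l)%N -> (nat_shift_perm k pi x < k + l)%N.
Proof.
rewrite /nat_shift_perm => lt_x; case: (ltnP x k) => h; first lia.
by rewrite ltn_add2l nat_perm_lt; lia.
Qed.

Lemma nat_shift_perm_inj k l (pi : 'S_l) : injective (nat_shift_perm k pi).
Proof.
move=> x y; rewrite /nat_shift_perm.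
by case: (ltnP x k) => hx; case: (ltnP y k) => hy; try lia; move/addnI/nat_perm_inj; lia.
Qed.

Lemma mx_at_val (R : Type) m p (x0 : R) (M : 'M[R]_(m, p)) (i : 'I_m) (j : 'I_p) :
  mx_at x0 M i j = M i j.
Proof. by rewrite /mx_at !valK. Qed.

Lemma mx_at_mx (R : Type) m p (x0 : R) (F : nat -> nat -> R) x y :
  mx_at x0 (\matrix_(i < m, j < p) F i j) x y =
  if (x < m)%N && (y < p)%N then F x y else x0.
Proof.
rewrite /mx_at; case: insubP => [i -> <-|/negbTE->] //.
by case: insubP => [j -> <-|/negbTE->]; rewrite ?mxE.
Qed.

Lemma mx_at_col_mx (R : Type) m1 m2 p (x0 : R) (U : 'M[R]_(m1, p))
  (L : 'M[R]_(m2, p)) x y :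
  mx_at x0 (col_mx U L) x y =
  if (x < m1)%N then mx_at x0 U x y else mx_at x0 L (x - m1)%N y.
Proof.
have mx_at_row m (M : 'M[R]_(m, p)) (i : 'I_m) :
    mx_at x0 M i y = if insub y is Some j then M i j else x0.
  by rewrite /mx_at valK.
case: ltnP => [x_lt|x_ge].
  rewrite -[x]/(val (lshift m2 (Ordinal x_lt))) !mx_at_row.
  by case: insub => // j; rewrite col_mxEu.
case: (ltnP x (m1 + m2)) => [x_lt|x_ge'].
  have d_lt : (x - m1 < m2)%N by lia.
  have -> : x = rshift m1 (Ordinal d_lt) by rewrite /= subnKC.
  rewrite mx_at_row /= addKn -[(x - m1)%N]/(val (Ordinal d_lt)) mx_at_row.
  by case: insub => // j; rewrite col_mxEd.
by rewrite /mx_at !insubN // -leqNgt; lia.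
Qed.

Lemma mx_atZ (R : pzRingType) m p (a : R) (M : 'M[R]_(m, p)) x y :
  mx_at 0 (a *: M) x y = a * mx_at 0 M x y.
Proof.
rewrite /mx_at; case: insub => [i|]; last by rewrite mulr0.
by case: insub => [j|]; rewrite ?mxE ?mulr0.
Qed.

Lemma mx_at_signperm m p (M : 'M[Z4]_(m, p)) r c e x y :
  mx_at 0 (signperm_mx M r c e) x y =
  sg (nat_flag e y) * mx_at 0 M (nat_perm r x) (nat_perm c y).
Proof.
rewrite /mx_at /nat_perm /nat_flag.
by case: insubP => [i _ _|hx]; case: insubP => [j _ _|hy];
  rewrite ?valK ?insubN ?mulr0 ?mxE.
Qed.

Lemma is01_mx_at m p (M : 'M[Z4]_(m, p)) x y :
  is01 M -> (nat_of_ord (mx_at 0%R M x y) <= 1)%N.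
Proof. by move=> hM; rewrite /mx_at; case: insub => // i; case: insub. Qed.

Definition Gmat_left k1 k2 (A : 'M[Z4]_(k1, k2)) (x y : nat) : Z4 :=
  if (x < k1)%N then
    (if (y < k1)%N then (x == y)%:R else mx_at 0 A x (y - k1)%N)
  else (if (y < k1)%N then 0 else 2%:R * (x - k1 == y - k1)%N%:R).

Lemma GmatE n k1 k2 (A : 'M[Z4]_(k1, k2)) (B : 'M[Z4]_(k1, n - k1 - k2))
  (D : 'M[Z4]_(k2, n - k1 - k2)) (i : 'I_(k1 + k2)) (j : 'I_n) :
  Gmat A B D i j =
  if (j < k1 + k2)%N then Gmat_left A i j
  else mx_at 0 (col_mx B (2%:R *: D)) i (j - k1 - k2)%N.
Proof.
rewrite mxE /Gmat_left mx_at_col_mx mx_atZ.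
by case: (ltnP j k1) => hj1; case: (ltnP j (k1 + k2)) => hj2 //; lia.
Qed.

Lemma Gmat_left_signperm k1 k2 (A : 'M[Z4]_(k1, k2)) (s : 'S_k1) x y :
  Gmat_left (signperm_mx A s 1 no_sign) x y =
  Gmat_left A (nat_perm s x) (nat_perm s y).
Proof.
rewrite /Gmat_left !nat_perm_lt mx_at_signperm nat_flag_no_sign nat_perm1 mul1r.
case: (ltnP x k1) => hx; case: (ltnP y k1) => hy.
- by rewrite (inj_eq (@nat_perm_inj _ s)).
- by rewrite (nat_perm_out s hy).
- by [].
- by rewrite !nat_perm_out.
Qed.

Lemma mx_at_col_mx_signperm k1 k2 l (B : 'M[Z4]_(k1, l)) (D : 'M[Z4]_(k2, l))
  (s : 'S_k1) (pi : 'S_l) e x y :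
  mx_at 0 (col_mx (signperm_mx B s pi e) (2%:R *: signperm_mx D 1 pi no_sign)) x y =
  sg (nat_flag e y) * mx_at 0 (col_mx B (2%:R *: D)) (nat_perm s x) (nat_perm pi y).
Proof.
rewrite !mx_at_col_mx !mx_atZ !mx_at_signperm nat_perm_lt nat_flag_no_sign.
by case: ltnP => hx //; rewrite nat_perm1 mul1r (nat_perm_out s hx) sg_mul2.
Qed.

(* The row permutation of A is matched by the same permutation of the first k1
   columns, keeping the identity block; column signs are absorbed by 2D. *)
Lemma code_equiv_Gmat_signperm n k1 k2 (hk : (k1 + k2 <= n)%N)
  (A : 'M[Z4]_(k1, k2)) (B : 'M[Z4]_(k1, n - k1 - k2))
  (D : 'M[Z4]_(k2, n - k1 - k2)) (s : 'S_k1) (pi : 'S_(n - k1 - k2)) e :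
  code_equiv (gen_code (Gmat A B D))
    (gen_code (Gmat (signperm_mx A s 1 no_sign) (signperm_mx B s pi e)
                    (signperm_mx D 1 pi no_sign))).
Proof.
have [r rE] : exists r : 'S_(k1 + k2), forall i, val (r i) = nat_perm s i.
  apply: (exists_perm_of_nat (@nat_perm_inj _ s)) => x.
  by apply: nat_perm_ltn; lia.
have [t tE] : exists t : 'S_n,
    forall j, val (t j) = nat_perm s (nat_shift_perm (k1 + k2) pi j).
  have t_inj := inj_comp (@nat_perm_inj _ s) (@nat_shift_perm_inj (k1 + k2) _ pi).
  apply: (exists_perm_of_nat t_inj) => x lt_xn; apply: nat_perm_ltn; first lia.
  have n_split : (k1 + k2 + (n - k1 - k2))%N = n by lia.
  by have := @nat_shift_perm_lt (k1 + k2) _ pi x; rewrite n_split; apply.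
pose E (j : 'I_n) := (k1 + k2 <= j)%N && nat_flag e (j - k1 - k2).
suff -> : Gmat (signperm_mx A s 1 no_sign) (signperm_mx B s pi e)
            (signperm_mx D 1 pi no_sign) = signperm_mx (Gmat A B D) r t E.
  exact: code_equiv_signperm_mx.
apply/matrixP => i j; rewrite [RHS]mxE !GmatE rE tE /E /nat_shift_perm.
case: ltnP => hj /=.
  by rewrite mul1r Gmat_left_signperm nat_perm_ltn ?leq_addr.
rewrite nat_perm_out; last lia.
rewrite ltnNge leq_addr /= mx_at_col_mx_signperm.
have shiftE : (j - (k1 + k2) = j - k1 - k2)%N by lia.
by rewrite shiftE -addnA addKn addKn.
Qed.

Lemma exists_sign_inBset k l (B : 'M[Z4]_(k, l)) :
  exists e, inBset (signperm_mx B 1 1 e).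
Proof.
case: (boolP [forall i, forall j, in02 (B i j)]) => [/forallP all02|].
  by exists no_sign; left => i j; rewrite mxE !perm1 mul1r; move/forallP: (all02 i).
rewrite negb_forall => ex_not02.
pose P x := [exists i : 'I_k, (val i == x) && [exists j, ~~ in02 (B i j)]].
have exP : exists x, P x.
  case/existsP: ex_not02 => i; rewrite negb_forall => not02.
  by exists (val i); apply/existsP; exists i; rewrite eqxx.
case: (ex_minnP exP) => x0 /existsP[i0 /andP[/eqP i0E /existsP[j0 hj0]]] x0_min.
exists (fun j => nat_of_ord (B i0 j) == 3%N); right; exists i0.
split; [|split].
- move=> i lt_i0 j; rewrite mxE !perm1 in02_sg; apply/negPn/negP => not02.
  have : (x0 <= i)%N.
    by apply: x0_min; apply/existsP; exists i; rewrite eqxx; apply/existsP; exists j.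
  by rewrite -i0E leqNgt lt_i0.
- by exists j0; rewrite mxE !perm1 in02_sg.
- by move=> j; rewrite mxE !perm1 in012_sg_eq3.
Qed.

Lemma inBset_perm_col k l (B : 'M[Z4]_(k, l)) (pi : 'S_l) :
  inBset B -> inBset (signperm_mx B 1 pi no_sign).
Proof.
case=> [all02|[i0 [above02 [[j0 hj0] all012]]]].
  by left => i j; rewrite mxE perm1 mul1r.
right; exists i0; split; [|split].
- by move=> i lt_i0 j; rewrite mxE perm1 mul1r above02.
- by exists ((pi^-1)%g j0); rewrite mxE perm1 mul1r permKV.
- by move=> j; rewrite mxE perm1 mul1r.
Qed.

Lemma rowseq_signperm m p (M : 'M[Z4]_(m, p)) r i :
  rowseq (signperm_mx M r 1 no_sign) i = rowseq M (r i).
Proof. by apply: eq_map => j; rewrite mxE perm1 mul1r. Qed.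

Lemma colseq_signperm m p (M : 'M[Z4]_(m, p)) c j :
  colseq (signperm_mx M 1 c no_sign) j = colseq M (c j).
Proof. by apply: eq_map => i; rewrite mxE perm1 mul1r. Qed.

Lemma exists_inV_code_equiv n k1 k2 (hk : (k1 + k2 <= n)%N)
  (A : 'M[Z4]_(k1, k2)) (B : 'M[Z4]_(k1, n - k1 - k2))
  (D : 'M[Z4]_(k2, n - k1 - k2)) :
  is01 A -> is01 D ->
  exists (A' : 'M[Z4]_(k1, k2)) (B' : 'M[Z4]_(k1, n - k1 - k2))
         (D' : 'M[Z4]_(k2, n - k1 - k2)), inV A' B' D' /\
    code_equiv (gen_code (Gmat A B D)) (gen_code (Gmat A' B' D')).
Proof.
move=> hA hD.
have [s s_sorted] := exists_sorting_perm (fun i => rowseq A i : seqlexi nat).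
pose B1 := signperm_mx B s 1 no_sign.
have [e e_inB] := exists_sign_inBset B1.
pose M := col_mx (signperm_mx B1 1 1 e) (2%:R *: D).
have [pi pi_sorted] := exists_sorting_perm (fun j => colseq M j : seqlexi nat).
exists (signperm_mx A s 1 no_sign), (signperm_mx B s pi (e \o pi)),
  (signperm_mx D 1 pi no_sign).
split; last exact: code_equiv_Gmat_signperm.
have B'E : signperm_mx B s pi (e \o pi) =
           signperm_mx (signperm_mx B1 1 1 e) 1 pi no_sign.
  by apply/matrixP => i j; rewrite !mxE !perm1 !mul1r.
have colE : col_mx (signperm_mx B s pi (e \o pi)) (2%:R *: signperm_mx D 1 pi no_sign)
            = signperm_mx M 1 pi no_sign.
  apply/matrixP => i j; rewrite B'E !mxE perm1 mul1r.
  by case: (split i) => a; rewrite !mxE !perm1 !mul1r.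
rewrite /inV colE B'E; split; [|split; [|split; [|split]]].
- by move=> i j; rewrite mxE mul1r hA.
- by move=> i j; rewrite mxE mul1r hD.
- by move=> i j le_ij; rewrite !rowseq_signperm lexleE; apply: s_sorted.
- exact: inBset_perm_col.
- by move=> i j le_ij; rewrite !colseq_signperm lexleE; apply: pi_sorted.
Qed.

Lemma gen_code_triv_ext r m (G : 'M[Z4]_(r, m.+1)) (G0 : 'M[Z4]_(r, m)) :
  (forall i (j : 'I_m), G i (widen_ord (leqnSn m) j) = G0 i j) ->
  (forall i, G i ord_max = 0) ->
  gen_code G = triv_ext m.+1 (gen_code G0).
Proof.
move=> G_left G_last.
have mulE (v : 'rV_r) (j : 'I_m.+1) :
    (v *m G) 0 j = if (j < m)%N then mx_at 0 (v *m G0) 0 j else 0.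
  rewrite mxE; case: ltnP => hj.
    rewrite -[nat_of_ord j]/(val (Ordinal hj)) -[0%N]/(val (0 : 'I_1)) mx_at_val mxE.
    by apply: eq_bigr => i _; rewrite -G_left; congr (_ * G _ _); apply: val_inj.
  have -> : j = ord_max by apply/val_inj/eqP; rewrite eqn_leq hj -ltnS ltn_ord.
  by rewrite big1 // => i _; rewrite G_last mulr0.
apply/setP => x; rewrite inE; apply/imsetP/existsP.
- case=> v _ ->; exists (v *m G0); apply/andP; split; first by apply/imsetP; exists v.
  by apply/forallP => j; rewrite mulE.
- case=> c /andP[/imsetP[v _ ->] /forallP xE]; exists v => //.
  by apply/rowP => j; rewrite (eqP (xE j)) mulE.
Qed.

(* Column [j0] deleted; the width [q] is meant to be [p.-1]. *)
Definition mx_delcol (R : Type) r p q (x0 : R) (M : 'M[R]_(r, p)) (j0 : nat)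
  : 'M[R]_(r, q) := \matrix_(i, j) mx_at x0 M i (bump j0 j).

Lemma mx_at_delcol (R : Type) r p q (x0 : R) (M : 'M[R]_(r, p)) j0 x y :
  mx_at x0 (mx_delcol q x0 M j0) x y =
  if (y < q)%N then mx_at x0 M x (bump j0 y) else x0.
Proof.
rewrite /mx_delcol (mx_at_mx r q x0 (fun x y => mx_at x0 M x (bump j0 y))).
case: (ltnP x r) => hx; case: ltnP => //= _.
by rewrite /mx_at insubN // -leqNgt.
Qed.

Lemma zero_col_triv_ext m n k1 k2 (hm : m.+1 = n) (A : 'M[Z4]_(k1, k2))
  (B : 'M[Z4]_(k1, n - k1 - k2)) (D : 'M[Z4]_(k2, n - k1 - k2))
  (j0 : 'I_(n - k1 - k2)) :
  is01 A -> is01 D -> (forall i, col_mx B (2%:R *: D) i j0 = 0) ->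
  exists C0 : {set 'rV[Z4]_m},
    has_type k1 k2 C0 /\ code_equiv (gen_code (Gmat A B D)) (triv_ext n C0).
Proof.
move=> hA hD zero_j0; subst n.
have hk : (k1 + k2 <= m)%N by have := ltn_ord j0; lia.
pose B0 := mx_delcol (m - k1 - k2) 0 B j0.
pose D0 := mx_delcol (m - k1 - k2) 0 D j0.
exists (gen_code (Gmat A B0 D0)); split.
  by apply: has_type_gen_code => // i j; rewrite mxE is01_mx_at.
have c_lt : (k1 + k2 + j0 < m.+1)%N by have := ltn_ord j0; lia.
(* [t] moves the zero column [k1 + k2 + j0] to the last position *)
pose t := lift_perm ord_max (Ordinal c_lt) 1%g.
suff -> : triv_ext m.+1 (gen_code (Gmat A B0 D0)) =
          gen_code (signperm_mx (Gmat A B D) 1 t no_sign).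
  exact: code_equiv_signperm_mx.
have subK x : (k1 + k2 + x - k1 - k2 = x)%N by lia.
symmetry; apply: gen_code_triv_ext => [i [j lt_jm]|i]; rewrite mxE perm1 mul1r.
- have -> : widen_ord (leqnSn m) (Ordinal lt_jm) = lift ord_max (Ordinal lt_jm).
    by apply: val_inj; rewrite /= /bump leqNgt lt_jm.
  rewrite /t lift_perm_lift perm1 !GmatE /=.
  case: (ltnP j (k1 + k2)) => hj.
    by rewrite /bump (_ : k1 + k2 + j0 <= j = false)%N ?add0n ?hj //; lia.
  have [d jE] : exists d, j = (k1 + k2 + d)%N by exists (j - (k1 + k2))%N; rewrite subnKC.
  have d_lt : (d < m - k1 - k2)%N by lia.
  rewrite jE bumpDl !subK ltnNge leq_addr /=.
  by rewrite !mx_at_col_mx !mx_atZ !mx_at_delcol d_lt.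
- by rewrite /t lift_perm_id GmatE /= ltnNge leq_addr /= subK mx_at_val zero_j0.
Qed.

Theorem mainTheorem12 (n k1 k2 : nat) (hk : (k1 + k2 <= n)%N)
  (C : {set 'rV['Z_4]_n}) :
  has_type k1 k2 C ->
  (forall (m : nat) (C0 : {set 'rV['Z_4]_m}), m.+1 = n ->
     has_type k1 k2 C0 -> ~ code_equiv C (triv_ext n C0)) ->
  exists C' : {set 'rV['Z_4]_n},
    has_type k1 k2 C' /\ code_equiv C C' /\
    exists (A : 'M['Z_4]_(k1, k2)) (B : 'M['Z_4]_(k1, n - k1 - k2))
           (D : 'M['Z_4]_(k2, n - k1 - k2)),
      inV A B D /\ C' = gen_code (Gmat A B D) /\
      (forall j : 'I_(n - k1 - k2), exists i : 'I_(k1 + k2),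
         col_mx B (2%:R *: D) i j != 0).
Proof.
move=> [_ [_ [A [B [D [hA [hD C_perm]]]]]]] not_triv.
have [A' [B' [D' [V' equiv']]]] := exists_inV_code_equiv hk B hA hD.
have [hA' [hD' _]] := V'.
have C_equiv := code_equiv_trans (perm_equiv_code_equivV C_perm) equiv'.
exists (gen_code (Gmat A' B' D')); split; first exact: has_type_gen_code.
split=> //; exists A', B', D'; do 2!split=> //.
move=> j; case: (boolP [exists i, col_mx B' (2%:R *: D') i j != 0]) => [/existsP //|].
rewrite negb_exists => /forallP zero_j; exfalso.
have n_pos : n.-1.+1 = n by have := ltn_ord j; lia.
have zero_col i : col_mx B' (2%:R *: D') i j = 0.
  by apply/eqP; rewrite -[_ == _]negbK zero_j.
have [C0 [C0_type C0_equiv]] := zero_col_triv_ext n_pos hA' hD' zero_col.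
exact: not_triv C0 n_pos C0_type (code_equiv_trans C_equiv C0_equiv).
Qed.
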